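(* Let $I=(G,T,k)$ be a Node Multiway Cut instance with $s=|T|\ge 2$ satisfying: (R1) no two terminals are adjacent and $p(I)\ge 0$; (R2) no vertex of $V\setminus T$ is adjacent to two distinct terminals; (R3) for every terminal $t$ and every neighbour $w\in V\setminus T$ of $t$, the optimum of the LP-relaxation of $I$ with the additional constraint $d_w=0$ is strictly larger than $LP(I)$. If $q(I)\ge \frac{s-2}{s-1}k$ or $q(I)\le 2p(I)$, then $I$ is a YES-instance.
   Context: A Node Multiway Cut instance $I=(G,T,k)$ consists of a simple undirected graph $G=(V,E)$, a set $T\subseteq V$ of terminals and an integer $k$; it is a YES-instance iff there is a set $X\subseteq V\setminus T$ with $|X|\le k$ such that every path in $G$ between two distinct terminals contains a vertex of $X$. Let $\mathcal P(I)$ be the set of all simple paths in $G$ connecting two distinct terminals. The LP-relaxation of $I$ is: minimize $\sum_{v\in V\setminus T} d_v$ subject to $\sum_{v\in V(P)\setminus T} d_v\ge 1$ for every $P\in\mathcal P(I)$ and $d_v\ge 0$ for all $v\in V\setminus T$. $LP(I)$ denotes its optimum value and $p(I)=k-LP(I)$. For $t\in T$, a separating cut of $t$ is a set $S\subseteq V\setminus T$ such that $t$ is disconnected from $T\setminus\{t\}$ in $G-S$; $m(I,t)$ is the minimum size of a separating cut of $t$, and $q(I)=k-\max_{t\in T}m(I,t)$. *)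

(* Node Multiway Cut: graph = symmetric irreflexive relation
   e on a finite vertex type V; terminals T : {set V}; LP values live in an
   arbitrary real (ordered) field R. *)
From HB Require Import structures.
From mathcomp Require Import all_boot all_order all_algebra.
Set Implicit Arguments. Unset Strict Implicit. Unset Printing Implicit Defensive.
Import Order.TTheory GRing.Theory Num.Theory.
Local Open Scope ring_scope.

Section NMC.
Variable V : finType.

Definition tpath (e : rel V) (T : {set V}) (p : seq V) : bool :=
  match p with
  | [::] => false
  | x :: r => [&& path e x r, uniq (x :: r), x \in T, last x r \in T
                  & x != last x r]
  end.

Definition nmc_yes (e : rel V) (T : {set V}) (k : nat) : Prop :=
  exists X : {set V}, [/\ X \subset ~: T, (#|X| <= k)%N &
    forall p, tpath e T p -> has (fun v => v \in X) p].

Definition del_rel (e : rel V) (S : {set V}) : rel V :=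
  [rel x y | [&& e x y, x \notin S & y \notin S]].

Definition sepcut (e : rel V) (T : {set V}) (t : V) (S : {set V}) : bool :=
  (S \subset ~: T) &&
  [forall u, ((u \in T) && (u != t)) ==> ~~ connect (del_rel e S) t u].

(* m(I,t): minimum size of a separating cut of t (default #|V| if none exists) *)
Definition mcut (e : rel V) (T : {set V}) (t : V) : nat :=
  \big[minn/#|V|]_(S : {set V} | sepcut e T t S) #|S|.

Definition maxm (e : rel V) (T : {set V}) : nat := \max_(t in T) mcut e T t.

Variable R : realFieldType.

(* feasible solutions of the LP relaxation (d is only relevant on V \ T) *)
Definition lp_feasible (e : rel V) (T : {set V}) (d : V -> R) : Prop :=
  (forall v, v \notin T -> 0 <= d v) /\
  (forall p, tpath e T p -> 1 <= \sum_(v <- p | v \notin T) d v).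

Definition lp_obj (T : {set V}) (d : V -> R) : R := \sum_(v | v \notin T) d v.

Definition is_min_val (P : (V -> R) -> Prop) (obj : (V -> R) -> R) (val : R) : Prop :=
  (exists d, P d /\ obj d = val) /\ (forall d, P d -> val <= obj d).

Definition LPopt (e : rel V) (T : {set V}) (lp : R) : Prop :=
  is_min_val (lp_feasible e T) (lp_obj T) lp.

Definition LPopt_fix0 (e : rel V) (T : {set V}) (w : V) (val : R) : Prop :=
  is_min_val (fun d => lp_feasible e T d /\ d w = 0) (lp_obj T) val.

End NMC.

(* Let N be the set of non-terminals adjacent to a terminal and M = max_t m(I,t).
   - If q(I) >= (s-2)/(s-1) k then (s-1) M <= k, and the union of minimum
     separating cuts of all terminals but one is a solution of size <= k.
   - The LP relaxation is half-integral: it has an optimal solution y with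
     every y v equal to 0 or at least 1/2 (threshold rounding of Garg, Vazirani
     and Yannakakis).  By (R3) such a y is at least 1/2 on every vertex of N,
     so |N| <= 2 LP(I).  If q(I) <= 2 p(I) this gives |N| <= k + M; removing
     from N the neighbourhood of a terminal t0 with m(I,t0) = M (which has at
     least M vertices since it separates t0) leaves a set of size <= k, and by
     (R1), (R2) every terminal path leaves its endpoint other than t0 through it. *)
From HB Require Import structures.
From mathcomp Require Import all_boot all_order all_algebra.
From mathcomp Require Import lra zify.
Set Implicit Arguments. Unset Strict Implicit. Unset Printing Implicit Defensive.
Import Order.TTheory GRing.Theory Num.Theory.

Section TerminalPaths.
Variables (V : finType) (e : rel V) (T : {set V}).
Hypothesis e_sym : symmetric e.
Hypothesis R1 : forall t1 t2, t1 \in T -> t2 \in T -> ~~ e t1 t2.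
Hypothesis R2 : forall v t1 t2, v \notin T -> t1 \in T -> t2 \in T ->
  e v t1 -> e v t2 -> t1 = t2.

Lemma tpath_rev t r : tpath e T (t :: r) -> tpath e T (last t r :: rev (belast t r)).
Proof.
move=> /and5P [hp hu tT lT ne].
have E : rev (t :: r) = last t r :: rev (belast t r) by rewrite lastI rev_rcons.
have hl : last (last t r) (rev (belast t r)) = t.
  case: r {hp hu lT E} ne => [|x r] ne; first by move: ne; rewrite eqxx.
  by rewrite [belast _ _]/= rev_cons last_rcons.
rewrite /tpath hl tT lT -E rev_uniq hu eq_sym ne !andbT rev_path.
by rewrite (eq_path (e' := e)) // => a b; rewrite /= e_sym.
Qed.

Lemma tpath_end_avoids u t r : tpath e T (t :: r) -> (t != u) || (last t r != u).
Proof.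
case/and5P => _ _ _ _ ne; case: (eqVneq t u) => //= tu.
by rewrite -tu eq_sym.
Qed.

Lemma tpath_has_either_end (a Q : pred V) t r : tpath e T (t :: r) ->
  (forall t' r', tpath e T (t' :: r') -> Q t' -> has a (t' :: r')) ->
  Q t || Q (last t r) -> has a (t :: r).
Proof.
move=> tp H /orP [h|h]; first exact: H.
have E : rev (t :: r) = last t r :: rev (belast t r) by rewrite lastI rev_rcons.
by rewrite -has_rev E; apply: H (tpath_rev tp) h.
Qed.

Lemma tpath_leaves_through_nbr t r : tpath e T (t :: r) ->
  exists2 x, x \in r & (x \notin T) && e t x.
Proof.
case/and5P => hp _ tT lT ne; case: r hp lT ne => [|x r] /=; first by rewrite eqxx.
case/andP => etx _ _ _; exists x; first exact: mem_head.
by rewrite etx andbT; apply/negP => xT; move: (R1 tT xT); rewrite etx.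
Qed.

Lemma path_avoiding (S : {set V}) x r : path e x r ->
  all (fun v => v \notin S) (x :: r) -> path (del_rel e S) x r.
Proof.
elim: r x => [//|y r IH] x /= /andP [exy hr] /and3P [xS yS hall].
by rewrite /del_rel /= exy xS yS /=; apply: IH => //=; rewrite yS.
Qed.

Lemma sepcut_hit t r S : tpath e T (t :: r) -> sepcut e T t S ->
  has (fun v => v \in S) (t :: r).
Proof.
move=> /and5P [hp hu tT lT ne] /andP [_ /forallP hS].
apply/negPn/negP; rewrite -all_predC => hall.
have := hS (last t r); rewrite lT eq_sym ne /= => /negP; apply.
by apply/connectP; exists r => //; apply: path_avoiding.
Qed.

Lemma sepcut_nbrs t : t \in T -> sepcut e T t [set w | e t w].
Proof.
move=> tT; apply/andP; split.
  apply/subsetP => w; rewrite inE in_setC => etw; apply/negP => wT.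
  by move: (R1 tT wT); rewrite etw.
apply/forallP => u; apply/implyP => /andP [uT ut]; apply/negP => /connectP [p hp ep].
case: p hp ep => [_ eu|x p]; first by move: ut; rewrite eu eqxx.
by rewrite /= /del_rel /= => /andP [/and3P [etx _]]; rewrite inE etx.
Qed.

Lemma mcut_le t S : sepcut e T t S -> mcut e T t <= #|S|.
Proof. exact: (@bigmin_le_cond _ nat). Qed.

(* ... and, for a terminal t, it is attained (by (R1), the set of all
   non-terminals is a separating cut, so the default value #|V| is harmless). *)
Lemma mcut_attained t : t \in T -> exists S, sepcut e T t S && (#|S| <= mcut e T t).
Proof.
move=> tT; have [S hS] : exists S, sepcut e T t S.
  by exists [set w | e t w]; apply: sepcut_nbrs.
have : (mcut e T t = #|V|) \/ exists2 S, sepcut e T t S & mcut e T t = #|S|.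
  rewrite /mcut; elim/big_ind: _ => [|a b ha hb|S' hS']; [by left| |by right; exists S'].
  by rewrite /minn; case: ifP.
case=> [->|[S' h1 ->]]; last by exists S'; rewrite h1 leqnn.
by exists S; rewrite hS max_card.
Qed.

Lemma card_bigcup_le (I A : finType) (P : pred I) (F : I -> {set A}) :
  #|\bigcup_(i | P i) F i| <= \sum_(i | P i) #|F i|.
Proof.
elim/big_rec2: _ => [|i X n _ h]; first by rewrite cards0.
by apply: leq_trans (leq_card_setU _ _) _; rewrite leq_add2l.
Qed.

Lemma cover_by_cuts k : 0 < #|T| -> (#|T| - 1) * maxm e T <= k -> nmc_yes e T k.
Proof.
move=> /card_gt0P [t0 t0T] hk.
pose cut t := odflt set0 [pick S | sepcut e T t S && (#|S| <= maxm e T)].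
have cutP t : t \in T -> sepcut e T t (cut t) && (#|cut t| <= maxm e T).
  move=> tT; rewrite /cut; case: pickP => [S //|none].
  have [S /andP [hS hm]] := mcut_attained tT.
  by move: (none S); rewrite hS (leq_trans hm (leq_bigmax_cond _ tT)).
exists (\bigcup_(t in T :\ t0) cut t); split.
- apply/bigcupsP => t /setD1P [_ tT].
  by case/andP: (cutP t tT) => /andP [].
- apply: leq_trans (card_bigcup_le _ _) _.
  apply: leq_trans (_ : \sum_(t in T :\ t0) maxm e T <= _).
    by apply: leq_sum => t /setD1P [_ tT]; case/andP: (cutP t tT).
  by rewrite sum_nat_const; apply: leq_trans hk; rewrite (cardsD1 t0 T) t0T add1n subn1.
- case=> [//|t r] tp.
  apply: (tpath_has_either_end (Q := fun t' => t' != t0)) tp _ (tpath_end_avoids t0 tp).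
  move=> t' r' tp' ne; have t'T : t' \in T by case/and5P: tp'.
  case/andP: (cutP t' t'T) => /(sepcut_hit tp') hit _.
  by apply: sub_has hit => v hv; apply/bigcupP; exists t'; rewrite ?inE ?ne.
Qed.

Definition term_nbrs : {set V} := [set w | (w \notin T) && [exists t in T, e t w]].

(* Second cover: the terminal neighbours, minus the neighbourhood of a terminal
   attaining M; by (R2) no other terminal has a neighbour in it. *)
Lemma cover_by_neighbours k : 0 < #|T| -> #|term_nbrs| <= k + maxm e T ->
  nmc_yes e T k.
Proof.
move=> T0 hN; have [ts tsT eM] := eq_bigmax_cond (mcut e T) T0.
pose Nts := [set w | e ts w].
have Nts_sub : Nts \subset term_nbrs.
  apply/subsetP => w; rewrite !inE => etw; apply/andP; split.
    by apply/negP => wT; move: (R1 tsT wT); rewrite etw.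
  by apply/existsP; exists ts; rewrite tsT.
have Nts_big : mcut e T ts <= #|Nts| by apply/mcut_le/sepcut_nbrs.
exists (term_nbrs :\: Nts); split.
- by apply/subsetP => w; rewrite !inE => /andP [_ /andP [wT _]].
- rewrite cardsD (setIidPr Nts_sub) leq_subLR; apply: leq_trans hN _.
  by rewrite addnC leq_add2r /maxm eM.
- case=> [//|t r] tp.
  apply: (tpath_has_either_end (Q := fun t' => t' != ts)) tp _ (tpath_end_avoids ts tp).
  move=> t' r' tp' ne; have t'T : t' \in T by case/and5P: tp'.
  have [x xr /andP [xT etx]] := tpath_leaves_through_nbr tp'.
  apply/hasP; exists x; first by rewrite inE xr orbT.
  rewrite !inE xT /=; apply/andP; split; last by apply/existsP; exists t'; rewrite t'T.
  by apply: contra ne => etsx; apply/eqP; apply: (R2 xT) => //; rewrite e_sym.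
Qed.

End TerminalPaths.

Local Open Scope ring_scope.

Ltac split_minmax := repeat match goal with
  | |- context [Order.min ?a ?b] => case: (leP a b) => ?
  end; repeat match goal with
  | |- context [Order.max ?a ?b] =>
     lazymatch b with context [Order.max _ _] => fail | _ => case: (leP a b) => ? end
  end.

Section ThresholdAveraging.
Variables (R : realFieldType) (I : finType) (c lo hi : I -> R).

Definition step_at (th : R) : R := \sum_j c j * ((lo j <= th) && (th < hi j))%:R.

Definition overlap (x y : R) (j : I) : R :=
  Num.max 0 (Num.min (hi j) y - Num.max (lo j) x).

Definition step_integral (x y : R) : R := \sum_j c j * overlap x y j.

Definition breakpoints : seq R := [seq lo j | j <- enum I] ++ [seq hi j | j <- enum I].

Lemma step_integral_split x z y : x <= z -> z <= y ->
  step_integral x y = step_integral x z + step_integral z y.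
Proof.
move=> xz zy; rewrite /step_integral -big_split /=; apply: eq_bigr => j _.
rewrite -mulrDr /overlap; congr (_ * _).
by case: (leP (lo j) x); case: (leP (lo j) z); case: (leP (hi j) y); case: (leP (hi j) z);
  split_minmax; lra.
Qed.

(* Between consecutive breakpoints the step function is constant. *)
Lemma step_integral_const x y : x < y ->
  (forall p, p \in breakpoints -> ~~ ((x < p) && (p < y))) ->
  step_integral x y = (y - x) * step_at x.
Proof.
move=> xy hE; rewrite /step_integral /step_at mulr_sumr; apply: eq_bigr => j _.
rewrite mulrCA; congr (_ * _).
have /hE : lo j \in breakpoints by rewrite mem_cat map_f ?mem_enum.
have /hE : hi j \in breakpoints by rewrite mem_cat map_f ?mem_enum ?orbT.
rewrite /overlap !negb_and -!leNgt => hl hr.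
case: (leP (lo j) x) => h1; case: (ltP x (hi j)) => h2 /=; rewrite ?mulr1 ?mulr0;
  case/orP: hl => hl; case/orP: hr => hr; split_minmax; lra.
Qed.

Lemma next_point (E : seq R) x y : x < y ->
  exists z, [/\ x < z, z <= y, (z == y) || (z \in E) &
     forall p, p \in E -> ~~ ((x < p) && (p < z))].
Proof.
move=> xy; elim: E => [|q E [z [xz zy zE hz]]]; first by exists y; rewrite eqxx.
case: (boolP ((x < q) && (q < z))) => [/andP [xq qz]|hq].
  exists q; split; rewrite ?mem_head ?orbT //; first exact: le_trans (ltW qz) zy.
  move=> p; rewrite inE => /predU1P [->|pE]; first by rewrite ltxx andbF.
  apply: contra (hz p pE) => /andP [-> pq]; exact: lt_trans pq qz.
exists z; split => //; first by case/orP: zE => [->//|zE]; rewrite inE zE !orbT.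
by move=> p; rewrite inE => /predU1P [->|/hz].
Qed.

Lemma count_gt_strict (E : seq R) x z : x < z -> z \in E ->
  (count (> z) E < count (> x) E)%N.
Proof.
move=> xz; elim: E => [//|q E IH]; rewrite inE /= => /predU1P [<-| zE].
  rewrite ltxx xz add0n add1n ltnS; apply: sub_count => p; exact: lt_trans.
have := IH zE; case: (ltP z q) => h /=; first by rewrite (lt_trans xz h) !add1n.
by case: (x < q) => /=; rewrite ?add0n ?add1n // => /ltnW.
Qed.

Lemma next_breakpoint x y : x < y -> step_integral x y < (y - x) * step_at x ->
  exists z, [/\ z \in breakpoints, x < z, z < y &
    step_integral x z = (z - x) * step_at x].
Proof.
move=> xy hx; have [z [xz zy zE hz]] := next_point breakpoints xy.
have [ezy|nzy] := eqVneq z y.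
  by move: hx; rewrite -ezy (step_integral_const xz hz) ltxx.
exists z; split; rewrite ?(step_integral_const xz hz) //.
  by move: zE; rewrite (negbTE nzy).
by rewrite lt_neqAle nzy.
Qed.

(* Induction on the number of breakpoints beyond x: either x itself is good,
   or the step function is smaller somewhere beyond the next breakpoint. *)
Lemma threshold_below_average x y : x < y ->
  exists2 th, x <= th < y & (y - x) * step_at th <= step_integral x y.
Proof.
move: {2}(count (> x) breakpoints) (leqnn (count (> x) breakpoints)) => n.
elim: n x => [|n IH] x hn xy;
  (case: (leP ((y - x) * step_at x) (step_integral x y)) => hx;
   first by exists x; rewrite ?lexx);
  have [z [zB xz zy int_xz]] := next_breakpoint xy hx.
  by have := count_gt_strict xz zB; rewrite leqn0 in hn; rewrite (eqP hn).
have [th /andP [zth thy] int_zy] := IH z (leq_trans (count_gt_strict xz zB) hn) zy.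
exists th; first by rewrite thy (le_trans (ltW xz) zth).
move: hx; rewrite (step_integral_split (ltW xz) (ltW zy)) int_xz => hx.
have step_th : step_at th <= step_at x.
  rewrite leNgt; apply/negP => hlt.
  have : (y - z) * step_at x < (y - z) * step_at th by rewrite ltr_pM2l ?subr_gt0.
  nra.
have : 0 < z - x by rewrite subr_gt0.
nra.
Qed.

End ThresholdAveraging.

Lemma bigmin_attained (disp : Order.disp_t) (X : orderType disp) (I : eqType)
    (r : seq I) (P : pred I) (F : I -> X) x0 :
  \big[Order.min/x0]_(i <- r | P i) F i = x0 \/
  exists i, [/\ i \in r, P i & \big[Order.min/x0]_(j <- r | P j) F j = F i].
Proof.
elim: r => [|a r IH]; rewrite ?big_nil; first by left.
rewrite big_cons; case: ifP => Pa; first case: leP => _.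
- by right; exists a; rewrite mem_head.
- case: IH => [->|[i [ir Pi ->]]]; [by left | by right; exists i; rewrite inE ir orbT].
- case: IH => [->|[i [ir Pi ->]]]; [by left | by right; exists i; rewrite inE ir orbT].
Qed.

Section Rounding.
Variables (R : realFieldType) (V : finType) (e : rel V) (T : {set V}) (d : V -> R).
Hypothesis e_sym : symmetric e.
Hypothesis e_irr : irreflexive e.
Hypothesis d_ge0 : forall v, v \notin T -> 0 <= d v.
Hypothesis d_feas : forall p, tpath e T p -> 1 <= \sum_(v <- p | v \notin T) d v.

Definition wt (u : V) : R := if u \in T then 1 else d u.

(* weight of the walk t :: q, counting neither t nor the last vertex *)
Definition cost (t : V) (q : seq V) : R := \sum_(u <- q) wt u - wt (last t q).

Fixpoint walks (n : nat) : seq (seq V) :=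
  if n is n'.+1 then [::] :: [seq x :: s | x <- enum V, s <- walks n'] else [:: [::]].

(* distance from t to v: the least cost of a nonempty walk from t to v,
   capped at 1 (walks of length at most #|V| suffice, see [dist_le_cost]) *)
Definition dist (t v : V) : R :=
  \big[Num.min/1]_(q <- walks #|V| | path e t q && (last t q == v) && (q != [::]))
    cost t q.

Lemma wt_ge0 u : 0 <= wt u.
Proof. by rewrite /wt; case: ifP => h //; apply: d_ge0; rewrite h. Qed.

Lemma mem_walks n s : (size s <= n)%N -> s \in walks n.
Proof.
elim: n s => [|n IH] [|x s] //=; rewrite ?inE ?eqxx // ltnS => hs.
by apply/orP; right; apply/allpairsP; exists (x, s); rewrite /= mem_enum IH.
Qed.

(* Since weights are nonnegative, the weight of a duplicate-free sequence is at
   most that of any sequence containing it. *)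
Lemma sum_wt_sub (s p : seq V) : uniq s -> {subset s <= p} ->
  \sum_(u <- s) wt u <= \sum_(u <- p) wt u.
Proof.
move=> us sp; apply: (@le_trans _ _ (\sum_(u <- undup p) wt u)).
  rewrite big_uniq // [X in _ <= X]big_uniq ?undup_uniq //.
  rewrite [X in X <= _]big_mkcond [X in _ <= X]big_mkcond /=.
  apply: ler_sum => u _; case: ifP => h; first by rewrite mem_undup sp.
  by case: ifP => _; rewrite ?wt_ge0.
elim: p {sp} => [|a p IH] //=; rewrite big_cons; case: ifP => _.
  by rewrite -[X in X <= _]add0r lerD ?wt_ge0.
by rewrite big_cons lerD.
Qed.

Lemma cost_rcons t q v : cost t (rcons q v) = \sum_(u <- q) wt u.
Proof. by rewrite /cost big_rcons /= last_rcons addrK. Qed.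

Lemma cost_ge0 t q : q != [::] -> 0 <= cost t q.
Proof.
case/lastP: q => [//|q v] _; rewrite cost_rcons.
by apply: sumr_ge0 => u _; apply: wt_ge0.
Qed.

Lemma cost_shorten t q : path e t q ->
  exists p, [/\ path e t p, uniq (t :: p), last t p = last t q & cost t p <= cost t q].
Proof.
move=> hq; rewrite /cost; case: (shortenP hq) => p hp hu hsub; exists p; split => //.
by rewrite lerD2r; apply: sum_wt_sub => //; case/andP: hu.
Qed.

Lemma cost_terminal_walk t q : t \in T -> path e t q -> last t q \in T ->
  last t q != t -> 1 <= cost t q.
Proof.
move=> tT hq; have [p [hp hu <- le_pq]] := cost_shorten hq => lT lt.
apply: le_trans le_pq.
have tp : tpath e T (t :: p) by rewrite /tpath hp hu tT lT eq_sym lt.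
apply: le_trans (d_feas tp) _; rewrite big_cons tT /=.
case/lastP: p {hp hu tp} lT lt => [|p v] lT lt; first by move: lt; rewrite /= eqxx.
rewrite cost_rcons big_rcons /= -cats1 last_cat /= in lT *.
rewrite lT addr0 big_mkcond /=; apply: ler_sum => u _.
by rewrite /wt; case: (u \in T) => /=; rewrite ?ler01 ?lexx.
Qed.

Lemma dist_le_cost t q : path e t q -> last t q != t -> dist t (last t q) <= cost t q.
Proof.
move=> hq; have [p [hp hu <- le_pq]] := cost_shorten hq => lt.
apply: le_trans le_pq; apply: ge_bigmin_seq; last first.
  by rewrite hp eqxx /=; case: p {hp hu} lt => //=; rewrite eqxx.
by apply: mem_walks; case/andP: hu => _ /card_uniqP <-; apply: max_card.
Qed.

Lemma dist_le1 t v : dist t v <= 1.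
Proof. exact: bigmin_le_id. Qed.

Lemma dist_attained t v : dist t v = 1 \/
  exists q, [/\ path e t q, last t q = v, q != [::] & dist t v = cost t q].
Proof.
rewrite /dist; case: (@bigmin_attained _ R _ (walks #|V|)
   (fun q => path e t q && (last t q == v) && (q != [::])) (cost t) 1)
  => [->|[q [_ /andP [/andP [h1 /eqP h2] h3] h4]]]; [by left | by right; exists q].
Qed.

Lemma dist_ge0 t v : 0 <= dist t v.
Proof. by case: (dist_attained t v) => [->|[q [_ _ h ->]]]; [apply: ler01 | apply: cost_ge0]. Qed.

Lemma dist_nbr t v : e t v -> dist t v <= 0.
Proof.
move=> etv; have hq : path e t [:: v] by rewrite /= etv.
have vt : last t [:: v] != t by apply/eqP => /= vt; move: etv; rewrite vt e_irr.
by have := dist_le_cost hq vt; rewrite /cost /= big_seq1 subrr.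
Qed.

Lemma dist_edge t u v : e u v -> v != t -> dist t v <= dist t u + wt u.
Proof.
move=> euv vt; case: (dist_attained t u) => [->|[q [hq lq _ ->]]].
  by apply: le_trans (dist_le1 t v) _; rewrite lerDl wt_ge0.
have hq' : path e t (rcons q v) by rewrite rcons_path hq lq euv.
have := dist_le_cost hq'; rewrite last_rcons cost_rcons => /(_ vt) h.
apply: le_trans h _; case/lastP: q hq lq {hq'} => [|q x] _ lq.
  by rewrite /cost /= big_nil sub0r -lq addNr.
by rewrite cost_rcons big_rcons /= -lq last_rcons.
Qed.

Lemma dist_terminal t t' : t \in T -> t' \in T -> t' != t -> 1 <= dist t t'.
Proof.
move=> tT t'T ne; case: (dist_attained t t') => [->//|[q [hq lq _ ->]]].
by apply: cost_terminal_walk => //; rewrite lq.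
Qed.

(* Joining shortest walks from two distinct terminals to v yields a terminal
   walk through v. *)
Lemma dist_pair t t' v : t \in T -> t' \in T -> t != t' ->
  1 <= dist t v + wt v + dist t' v.
Proof.
move=> tT t'T ne.
case: (dist_attained t v) => [->|[p [hp lp pn ->]]].
  by rewrite -addrA lerDl addr_ge0 ?wt_ge0 ?dist_ge0.
case: (dist_attained t' v) => [->|[q [hq lq qn ->]]].
  by rewrite lerDr addr_ge0 ?wt_ge0 ?cost_ge0.
have [x [q' qE]] : exists x q', q = x :: q' by case: q {hq lq} qn => // x q'; exists x, q'.
have hW : path e t (p ++ rev (belast t' q)).
  rewrite cat_path hp /= lp -lq rev_path.
  by rewrite (eq_path (e' := e)) // => a b; rewrite /= e_sym.
have lW : last t (p ++ rev (belast t' q)) = t'.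
  by rewrite last_cat qE [belast _ _]/= rev_cons last_rcons.
have := cost_terminal_walk tT hW; rewrite lW t'T eq_sym ne => /(_ isT isT).
rewrite /cost lW big_cat /= big_rev.
have -> : \sum_(u <- belast t' q) wt u = wt t' + \sum_(u <- q) wt u - wt (last t' q).
  by rewrite qE /= big_cons -addrA lastI big_rcons /= addrK.
rewrite lp lq; lra.
Qed.

Lemma path_crosses (f g : V -> R) th x r : path e x r -> f x <= th ->
  th < f (last x r) -> (forall a b, e a b -> b \in r -> f b <= f a + g a) ->
  exists u, [/\ u \in x :: r, f u <= th & th < f u + g u].
Proof.
elim: r x => [|y r IH] x /=; first by move=> _ h1 h2; have := le_lt_trans h1 h2; rewrite ltxx.
move=> /andP [exy hr] hx hl hed.
case: (leP (f y) th) => hy.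
  have [|u [h1 h2 h3]] := IH y hr hy hl.
    by move=> a b eab br; apply: hed; rewrite // inE br orbT.
  by exists u; rewrite inE h1 orbT.
exists x; rewrite mem_head; split => //.
by apply: lt_le_trans hy _; apply: hed => //; rewrite mem_head.
Qed.

Lemma tpath_crossing th t r : 0 <= th -> th < 1 -> tpath e T (t :: r) ->
  exists u, [/\ u \in t :: r, u \notin T, dist t u <= th & th < dist t u + d u].
Proof.
move=> th0 th1 /and5P [hp hu tT lT ne].
case: r hp hu lT ne => [|x r] hp hu lT ne; first by move: ne; rewrite eqxx.
move: hp => /= /andP [etx hr].
have tr : t \notin x :: r by case/andP: hu.
have hed a b : e a b -> b \in r -> dist t b <= dist t a + wt a.
  move=> eab br; apply: dist_edge eab _; apply: contraNneq tr => <-.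
  by rewrite inE br orbT.
have ne' : last t (x :: r) != t by rewrite eq_sym.
have [u [h1 h2 h3]] := path_crosses hr (le_trans (dist_nbr etx) th0)
  (lt_le_trans th1 (dist_terminal tT lT ne')) hed.
have ut : u != t by apply: contraNneq tr => <-.
have uT : u \notin T.
  apply/negP => uT; have := dist_terminal tT uT ut.
  by rewrite leNgt (le_lt_trans h2 th1).
exists u; split => //; first by rewrite inE h1 orbT.
by move: h3; rewrite /wt (negbTE uT).
Qed.

(* alpha v: distance from v to its nearest terminal;
   beta v: distance from v to its second nearest terminal. *)
Definition alpha (v : V) : R := \big[Num.min/1]_(t <- enum T) dist t v.
Definition beta (v : V) : R :=
  \big[Num.min/1]_(p <- [seq (t, t') | t <- enum T, t' <- enum T] | p.1 != p.2)
     Num.max (dist p.1 v) (dist p.2 v).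

Lemma alpha_le t v : t \in T -> alpha v <= dist t v.
Proof. by move=> tT; apply: ge_bigmin_seq; rewrite ?mem_enum. Qed.

Lemma alpha_attained v : alpha v = 1 \/ exists2 t, t \in T & alpha v = dist t v.
Proof.
rewrite /alpha; case: (@bigmin_attained _ R _ (enum T) xpredT (dist^~ v) 1)
  => [->|[t [tT _ ->]]]; [by left | by right; exists t; rewrite // -mem_enum].
Qed.

Lemma beta_le t t' v : t \in T -> t' \in T -> t != t' ->
  beta v <= Num.max (dist t v) (dist t' v).
Proof.
move=> tT t'T ne; apply: (ge_bigmin_seq 1 (t, t')) => //.
by apply/allpairsP; exists (t, t'); rewrite !mem_enum.
Qed.

Lemma beta_attained v : beta v = 1 \/ exists t t', [/\ t \in T, t' \in T, t != t' &
  beta v = Num.max (dist t v) (dist t' v)].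
Proof.
rewrite /beta; case: (@bigmin_attained _ R _ [seq (t, t') | t <- enum T, t' <- enum T]
   (fun p : V * V => p.1 != p.2)
   (fun p => Num.max (dist p.1 v) (dist p.2 v)) 1) => [->|[[t t'] [pP /= ne ->]]].
  by left.
case/allpairsP: pP => [[a b] [/= aT bT [ea eb]]]; subst a b; right; exists t, t'.
by move: aT bT; rewrite !mem_enum ne => -> ->.
Qed.

Lemma alpha_ge0 v : 0 <= alpha v.
Proof. by case: (alpha_attained v) => [->|[t _ ->]]; rewrite ?ler01 ?dist_ge0. Qed.

Lemma alpha_le_beta v : alpha v <= beta v.
Proof.
case: (beta_attained v) => [->|[t [t' [tT _ _ ->]]]]; first exact: bigmin_le_id.
by rewrite le_max alpha_le.
Qed.

(* The nearest and second nearest terminals of v are joined by a walk through v. *)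
Lemma alpha_beta_pair v : v \notin T -> beta v < 1 -> 1 <= alpha v + d v + beta v.
Proof.
move=> vT; case: (beta_attained v) => [->|[t [t' [tT t'T ne ->]]]]; first by rewrite ltxx.
have wv : wt v = d v by rewrite /wt (negbTE vT).
move=> _; case: (alpha_attained v) => [->|[t0 t0T ->]].
  by rewrite -addrA lerDl addr_ge0 ?d_ge0 // le_max dist_ge0.
case: (eqVneq t0 t) => [->|ne0].
  by apply: le_trans (dist_pair v tT t'T ne) _; rewrite wv lerD2l le_max lexx orbT.
by apply: le_trans (dist_pair v t0T tT ne0) _; rewrite wv lerD2l le_max lexx.
Qed.

(* The rounding: each non-terminal v carries two intervals of weight 1/2,
   [beta v, 1) (index (v, true)) and [alpha v, alpha v + d v) (index (v, false));
   the rounded solution at threshold th counts the intervals containing th. *)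
Definition iwt (p : V * bool) : R := if p.1 \in T then 0 else 2^-1.
Definition ilo (p : V * bool) : R := if p.2 then beta p.1 else alpha p.1.
Definition ihi (p : V * bool) : R := if p.2 then 1 else alpha p.1 + d p.1.

Definition rounded (th : R) (v : V) : R :=
  \sum_(b : bool) iwt (v, b) * ((ilo (v, b) <= th) && (th < ihi (v, b)))%:R.

Lemma natr_bool (b : bool) : (b%:R : R) = if b then 1 else 0.
Proof. by case: b. Qed.

Lemma rounded_nonterminal th v : v \notin T -> rounded th v =
  2^-1 * ((beta v <= th) && (th < 1))%:R
  + 2^-1 * ((alpha v <= th) && (th < alpha v + d v))%:R.
Proof. by move=> vT; rewrite /rounded big_bool /iwt /ilo /ihi /= (negbTE vT). Qed.

Lemma rounded_terminal th v : v \in T -> rounded th v = 0.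
Proof. by move=> vT; rewrite /rounded big_bool /iwt /= vT !mul0r addr0. Qed.

Lemma rounded_ge0 th v : 0 <= rounded th v.
Proof.
have [vT|vT] := boolP (v \in T); first by rewrite rounded_terminal.
by rewrite rounded_nonterminal // !natr_bool; case: ifP => _; case: ifP => _; lra.
Qed.

Lemma rounded_half_integral th v : rounded th v = 0 \/ 2^-1 <= rounded th v.
Proof.
have [vT|vT] := boolP (v \in T); first by left; rewrite rounded_terminal.
rewrite rounded_nonterminal // !natr_bool.
by case: ifP => _; case: ifP => _; [right|right|right|left]; lra.
Qed.

Lemma rounded_crossing th t v : 0 <= th -> th < 2^-1 -> v \notin T -> t \in T ->
  dist t v <= th -> th < dist t v + d v -> 2^-1 <= rounded th v.
Proof.
move=> th0 th1 vT tT h1 h2; rewrite rounded_nonterminal // !natr_bool.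
have ha := alpha_le v tT.
case: (ltP th (alpha v + d v)) => h3.
  by rewrite (le_trans ha h1) /=; case: ifP => _; lra.
case: (alpha_attained v) => [ea|[t0 t0T ea]]; first by lra.
case: (eqVneq t0 t) => [et|ne]; first by rewrite -et in h2; lra.
have hb : beta v <= th.
  have ne' : t != t0 by rewrite eq_sym.
  by apply: le_trans (beta_le v tT t0T ne') _; rewrite ge_max h1 -ea (le_trans ha h1).
by rewrite hb (_ : th < 1) /=; [case: ifP => _; lra | lra].
Qed.

Lemma rounded_double_crossing th t t' v : th < 2^-1 -> v \notin T ->
  t \in T -> t' \in T -> t != t' ->
  dist t v <= th -> th < dist t v + d v -> dist t' v <= th -> th < dist t' v + d v ->
  rounded th v = 1.
Proof.
move=> th1 vT tT t'T ne h1 h2 h3 h4; rewrite rounded_nonterminal //.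
have hb : beta v <= th by apply: le_trans (beta_le v tT t'T ne) _; rewrite ge_max h1 h3.
have hd : th < alpha v + d v.
  case: (alpha_attained v) => [->|[t0 t0T ->]]; first by have := d_ge0 vT; lra.
  case: (eqVneq t0 t) => [-> //|ne0].
  by have := dist_pair v t0T tT ne0; rewrite /wt (negbTE vT); lra.
rewrite hb (le_trans (alpha_le v tT) h1) hd (_ : th < 1) /=; last by lra.
by rewrite mulr1n; lra.
Qed.

(* For th in [0, 1/2), the rounded solution is feasible: crossing a terminal
   path from both ends yields either two vertices of value >= 1/2 or one of
   value 1. *)
Lemma rounded_feasible th : 0 <= th -> th < 2^-1 -> lp_feasible e T (rounded th).
Proof.
move=> th0 th1; split => [v _|[//|t r] tp]; first exact: rounded_ge0.
have th1' : th < 1 by lra.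
have [u1 [u1p u1T h1 h2]] := tpath_crossing th0 th1' tp.
have [u2 [u2p u2T h3 h4]] := tpath_crossing th0 th1' (tpath_rev e_sym tp).
move: u2p; rewrite -rev_rcons -lastI mem_rev => u2p.
case/and5P: tp => _ hu tT lT ne.
have -> : \sum_(i <- t :: r | i \notin T) rounded th i = \sum_(i <- t :: r) rounded th i.
  by rewrite big_mkcond; apply: eq_bigr => i _; case: ifPn => // /negPn /rounded_terminal.
rewrite (bigD1_seq u1) //=.
case: (eqVneq u1 u2) => [eu|neu].
  rewrite -eu in h3 h4; rewrite (rounded_double_crossing th1 u1T tT lT ne h1 h2 h3 h4).
  by rewrite lerDl sumr_ge0 // => i _; apply: rounded_ge0.
rewrite big_mkcond (bigD1_seq u2) //= eq_sym neu.
have := rounded_crossing th0 th1 u1T tT h1 h2.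
have := rounded_crossing th0 th1 u2T lT h3 h4.
have : 0 <= \sum_(i <- t :: r | i != u2) (if i != u1 then rounded th i else 0).
  by apply: sumr_ge0 => i _; case: ifP => _; rewrite ?rounded_ge0.
lra.
Qed.

Lemma overlap_le_d v : v \notin T ->
  overlap ilo ihi 0 (2^-1) (v, true) + overlap ilo ihi 0 (2^-1) (v, false) <= d v.
Proof.
move=> vT; rewrite /overlap /ilo /ihi /=.
have a0 := alpha_ge0 v; have ab := alpha_le_beta v; have dd0 := d_ge0 vT.
have half_le1 : 2^-1 <= 1 :> R by lra.
rewrite (max_l (le_trans a0 ab)) (max_l a0) (min_r half_le1).
by case: (ltP (beta v) 1) => [/(alpha_beta_pair vT)|] *; split_minmax; lra.
Qed.

(* Averaged over th in [0, 1/2), the cost of the rounded solution is at most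
   the cost of d, so some threshold does at least as well. *)
Lemma rounded_cost : exists2 th, 0 <= th < 2^-1 & lp_obj T (rounded th) <= lp_obj T d.
Proof.
have half_pos : 0 < 2^-1 :> R by rewrite invr_gt0 ltr0n.
have [th th_range avg] := threshold_below_average iwt ilo ihi half_pos.
exists th => //.
have <- : step_at iwt ilo ihi th = lp_obj T (rounded th).
  rewrite /step_at /lp_obj /rounded -(pair_bigA _ (fun v b =>
    iwt (v, b) * ((ilo (v, b) <= th) && (th < ihi (v, b)))%:R)) /=.
  rewrite [RHS]big_mkcond /=; apply: eq_bigr => v _.
  by case: ifPn => // /negPn vT; rewrite big_bool /iwt /= vT !mul0r addr0.
have : step_integral iwt ilo ihi 0 (2^-1) <= 2^-1 * lp_obj T d.
  rewrite /step_integral /lp_obj -(pair_bigA _ (fun v b =>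
    iwt (v, b) * overlap ilo ihi 0 (2^-1) (v, b))) /=.
  rewrite mulr_sumr [X in _ <= X]big_mkcond /=; apply: ler_sum => v _.
  rewrite big_bool /iwt /=; case: ifPn => vT /=; first by rewrite !mul0r addr0.
  by rewrite -mulrDr ler_pM2l ?invr_gt0 ?ltr0Sn // overlap_le_d.
by move: avg; rewrite subr0; lra.
Qed.

Lemma rounding : exists y, [/\ lp_feasible e T y, lp_obj T y <= lp_obj T d &
  forall v, y v = 0 \/ 2^-1 <= y v].
Proof.
have [th /andP [th0 th1] cost_th] := rounded_cost.
exists (rounded th); split => //; first exact: rounded_feasible.
exact: rounded_half_integral.
Qed.

End Rounding.

Lemma half_integral_optimum (R : realFieldType) (V : finType) (e : rel V)
    (T : {set V}) (lp : R) :
  symmetric e -> irreflexive e -> LPopt e T lp ->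
  exists y, [/\ lp_feasible e T y, lp_obj T y = lp & forall v, y v = 0 \/ 2^-1 <= y v].
Proof.
move=> e_sym e_irr [[d [[d_ge0 d_feas] <-]] d_min].
have [y [y_feas y_cost y_half]] := rounding e_sym e_irr d_ge0 d_feas.
by exists y; split => //; apply/le_anti; rewrite y_cost d_min.
Qed.

(* Under (R3), a half-integral optimum is at least 1/2 on every terminal
   neighbour, hence there are at most 2 LP(I) of them. *)
Lemma term_nbrs_le_2lp (R : realFieldType) (V : finType) (e : rel V)
    (T : {set V}) (lp : R) :
  symmetric e -> irreflexive e -> LPopt e T lp ->
  (forall t w, t \in T -> w \notin T -> e t w ->
     forall val, LPopt_fix0 e T w val -> lp < val) ->
  #|term_nbrs e T|%:R <= 2 * lp.
Proof.
move=> e_sym e_irr hlp R3.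
have [y [y_feas y_cost y_half]] := half_integral_optimum e_sym e_irr hlp.
have nbr_half w : w \in term_nbrs e T -> 2^-1 <= y w.
  rewrite inE => /andP [wT /existsP [t /andP [tT etw]]].
  case: (y_half w) => // y0; suff /(R3 t w tT wT etw) : LPopt_fix0 e T w lp by rewrite ltxx.
  by split; [exists y | move=> d [d_feas _]; case: hlp => _; apply].
suff : #|term_nbrs e T|%:R * 2^-1 <= lp by lra.
rewrite -y_cost; apply: (@le_trans _ _ (\sum_(v in term_nbrs e T) y v)).
  by rewrite mulr_natl -sumr_const; apply: ler_sum.
rewrite /lp_obj [X in X <= _]big_mkcond [X in _ <= X]big_mkcond; apply: ler_sum => v _.
case: ifP => [|_]; first by rewrite inE => /andP [-> _].
by case: ifPn => // vT; apply: y_feas.1.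
Qed.

Lemma cut_budget (R : realFieldType) (s m k : nat) : (2 <= s)%N ->
  (s - 2)%N%:R / (s - 1)%N%:R * k%:R <= k%:R - m%:R :> R -> ((s - 1) * m <= k)%N.
Proof.
move=> s2; have s1_pos : 0 < (s - 1)%N%:R :> R by rewrite ltr0n subn_gt0.
have -> : (s - 2)%N%:R = (s - 1)%N%:R - 1 :> R.
  by rewrite (_ : (s - 2 = s - 1 - 1)%N) ?natrB //; lia.
rewrite -(ler_pM2l s1_pos) mulrA mulrCA mulfV ?lt0r_neq0 // mulr1 => h.
by rewrite -(ler_nat R) natrM; nra.
Qed.

Theorem mainTheorem6 (R : realFieldType) (V : finType) (e : rel V)
  (T : {set V}) (k : nat) (lp : R) :
  symmetric e -> irreflexive e ->
  (2 <= #|T|)%N ->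
  LPopt e T lp ->
  (* R1 *)
  (forall t1 t2, t1 \in T -> t2 \in T -> ~~ e t1 t2) ->
  0 <= k%:R - lp ->
  (* R2 *)
  (forall v t1 t2, v \notin T -> t1 \in T -> t2 \in T ->
     e v t1 -> e v t2 -> t1 = t2) ->
  (* R3 *)
  (forall t w, t \in T -> w \notin T -> e t w ->
     forall val, LPopt_fix0 e T w val -> lp < val) ->
  (* q(I) >= (s-2)/(s-1) k  or  q(I) <= 2 p(I) *)
  ((#|T| - 2)%N%:R / (#|T| - 1)%N%:R * k%:R <= k%:R - (maxm e T)%:R :> R
   \/ k%:R - (maxm e T)%:R <= 2 * (k%:R - lp) :> R) ->
  nmc_yes e T k.
Proof.
move=> e_sym e_irr T2 hlp R1 _ R2 R3 hq.
have T0 : (0 < #|T|)%N by apply: leq_trans T2.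
case: hq => hq.
  by apply: (cover_by_cuts e_sym R1 T0); apply: cut_budget T2 hq.
apply: (cover_by_neighbours e_sym R1 R2 T0).
have := term_nbrs_le_2lp e_sym e_irr hlp R3.
by rewrite -(ler_nat R) natrD; lra.
Qed.
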